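(* Let $(\mathcal A,\varphi,\mathcal F,\Phi)$ be a ncps of type B$'$ with associated algebra $\mathcal B$ and functional $\varphi$ on $\mathcal B$. For $i\in I$ let $\mathcal A_i$ be a subalgebra of $\mathcal A$ containing $1_{\mathcal A}$, $\mathcal F_i$ a subalgebra of $\mathcal F$, and $\mathcal B_i=\mathcal A_i\langle\mathcal F_i\rangle=\mathcal A_i\oplus{}_{\mathcal A_i}\langle\mathcal F_i\rangle$. Let $P\in\mathcal F$ with $\Phi(P)\ne0$ and $\mathcal F_P:=\{cP^n:n\in\mathbb N,c\in\mathbb C\}$. Assume that $((\mathcal A_i)_{i\in I},(\mathcal F_i)_{i\in I\sqcup\{P\}})$ is weakly B$'$-free. Then for any $n\in\mathbb N$, $i_1,\dots,i_n\in I$ with $i_l\ne i_{l+1}$ for all $l$, and $b_j=a_j+F_j\in\mathcal B_{i_j}$ ($a_j\in\mathcal A_{i_j}$, $F_j\in{}_{\mathcal A_{i_j}}\langle\mathcal F_{i_j}\rangle$) with $\varphi(b_j)=0$ for $1\le j\le n$, $$\varphi_P(b_1b_2\cdots b_n)=\varphi_P(F_1F_2\cdots F_n).$$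
   Context: Ncps of type B$'$ $(\mathcal A,\varphi,\mathcal F,\Phi)$: $\mathcal A$ unital complex algebra, $\varphi(1_{\mathcal A})=1$, $\mathcal F$ an algebra which is an $\mathcal A$-bimodule compatible with its multiplication, $\Phi:\mathcal F\to\mathbb C$ linear. $\mathcal B=\mathcal A\oplus\mathcal F$ with product $(a_1,f_1)(a_2,f_2)=(a_1a_2,a_1f_2+f_1a_2+f_1f_2)$, unit $1_{\mathcal A}$; $\varphi(a+f):=\varphi(a)$. $\varphi_P(b):=\Phi(Pb)/\Phi(P)$. ${}_{\mathcal A_1}\langle\mathcal F_1\rangle$ denotes the span in $\mathcal F$ of all $a_0f_1a_1\cdots a_{n-1}f_na_n$ with $n\ge1$, $a_l\in\mathcal A_1$, $f_l\in\mathcal F_1$; $\mathcal A_1\langle\mathcal F_1\rangle=\mathcal A_1\oplus{}_{\mathcal A_1}\langle\mathcal F_1\rangle$ is the subalgebra of $\mathcal B$ generated by $\mathcal A_1\oplus\mathcal F_1$. Weak B$'$-freeness of $((\mathcal A_i)_{i\in I},(\mathcal F_j)_{j\in J})$: the $\mathcal A_i$ are free w.r.t. $\varphi$ ($\varphi(c_1\cdots c_n)=0$ for alternating indices and centered $c_l\in\mathcal A_{i_l}$), and with $\mathcal A_0$, $\mathcal F_0$ the algebras generated by all $\mathcal A_i$, resp. all $\mathcal F_j$, $\Phi(c_0g_1c_1\cdots c_{n-1}g_nc_n)=\varphi(c_0c_n)\prod_{l=1}^{n-1}\varphi(c_l)\Phi(g_1\cdots g_n)$ for $n\ge1$, $c_l\in\mathcal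 A_0$, $g_l\in\mathcal F_0$. *)

From HB Require Import structures.
From mathcomp Require Import all_boot all_order all_algebra.
From mathcomp Require Import complex Rstruct.
Set Implicit Arguments. Unset Strict Implicit. Unset Printing Implicit Defensive.
Import GRing.Theory.
Local Open Scope ring_scope.

Definition C : numClosedFieldType := (Rdefinitions.R)[i].

Section NCPS.
Variables (A : algType C) (F : lmodType C).
Variables (mulF : F -> F -> F) (lact : A -> F -> F) (ract : F -> A -> F).

Definition linear_to_C (V : lmodType C) (f : V -> C) :=
  forall (c : C) (x y : V), f (c *: x + y) = c * f x + f y.

(* (A, phi, F, Phi) is a ncps of type B': A unital complex algebra (algType),
   phi linear with phi 1 = 1, F a (not necessarily unital) complex algebra
   which is an A-bimodule compatible with its multiplication, Phi linear. *)
Record ncpsB' (phi : A -> C) (Phi : F -> C) : Prop := {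
  ncps_phi_lin : linear_to_C phi;
  ncps_phi1 : phi 1 = 1;
  ncps_Phi_lin : linear_to_C Phi;
  mulF_linl : forall (c : C) x y z, mulF (c *: x + y) z = c *: mulF x z + mulF y z;
  mulF_linr : forall (c : C) x y z, mulF x (c *: y + z) = c *: mulF x y + mulF x z;
  mulF_assoc : forall x y z, mulF x (mulF y z) = mulF (mulF x y) z;
  lact_linl : forall (c : C) a b f, lact (c *: a + b) f = c *: lact a f + lact b f;
  lact_linr : forall (c : C) a f g, lact a (c *: f + g) = c *: lact a f + lact a g;
  lact1 : forall f, lact 1 f = f;
  lactM : forall a b f, lact (a * b) f = lact a (lact b f);
  ract_linl : forall (c : C) f g a, ract (c *: f + g) a = c *: ract f a + ract g a;
  ract_linr : forall (c : C) f a b, ract f (c *: a + b) = c *: ract f a + ract f b;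
  ract1 : forall f, ract f 1 = f;
  ractM : forall f a b, ract f (a * b) = ract (ract f a) b;
  lact_ract : forall a f b, ract (lact a f) b = lact a (ract f b);
  lact_mulF : forall a f g, lact a (mulF f g) = mulF (lact a f) g;
  ract_mulF : forall f g a, ract (mulF f g) a = mulF f (ract g a);
  mid_mulF : forall f a g, mulF (ract f a) g = mulF f (lact a g)
}.

(* The algebra B = A (+) F, elements written as pairs (a, f) = a + f. *)
Definition mulB (b1 b2 : A * F) : A * F :=
  (b1.1 * b2.1, lact b1.1 b2.2 + ract b1.2 b2.1 + mulF b1.2 b2.2).
Definition oneB : A * F := (1, 0).
Definition prodB (s : seq (A * F)) : A * F := foldr mulB oneB s.

Definition phiB (phi : A -> C) (b : A * F) : C := phi b.1.
Definition phiP (Phi : F -> C) (P : F) (b : A * F) : C :=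
  Phi (ract P b.1 + mulF P b.2) / Phi P.

Definition subalgA (S : A -> Prop) : Prop :=
  [/\ S 1, (forall x y, S x -> S y -> S (x + y)),
      (forall (c : C) x, S x -> S (c *: x)) & (forall x y, S x -> S y -> S (x * y))].
Definition subalgF (S : F -> Prop) : Prop :=
  [/\ S 0, (forall x y, S x -> S y -> S (x + y)),
      (forall (c : C) x, S x -> S (c *: x)) & (forall x y, S x -> S y -> S (mulF x y))].

Fixpoint tailword (g : nat -> F) (c : nat -> A) (k m : nat) : F :=
  match m with
  | 0 => ract (g k) (c k)
  | m'.+1 => mulF (ract (g k) (c k)) (tailword g c k.+1 m')
  end.
Fixpoint prodF (g : nat -> F) (k m : nat) : F :=
  match m with
  | 0 => g k
  | m'.+1 => mulF (g k) (prodF g k.+1 m')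
  end.
(* powF p n = p^(n+1) *)
Fixpoint powF (p : F) (n : nat) : F :=
  match n with 0 => p | n'.+1 => mulF p (powF p n') end.

(* The span _{A1}<F1> of all a_0 f_1 a_1 ... f_n a_n, n >= 1 *)
Inductive AFspan (A1 : A -> Prop) (F1 : F -> Prop) : F -> Prop :=
  | AFspan_word (m : nat) (g : nat -> F) (c : nat -> A) :
      (forall l, (l <= m.+1)%N -> A1 (c l)) ->
      (forall l, (1 <= l <= m.+1)%N -> F1 (g l)) ->
      AFspan A1 F1 (lact (c 0%N) (tailword g c 1 m))
  | AFspan0 : AFspan A1 F1 0
  | AFspanD x y : AFspan A1 F1 x -> AFspan A1 F1 y -> AFspan A1 F1 (x + y)
  | AFspanZ (k : C) x : AFspan A1 F1 x -> AFspan A1 F1 (k *: x).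

Inductive genA (I : Type) (S : I -> A -> Prop) : A -> Prop :=
  | genA_base i x : S i x -> genA S x
  | genA1 : genA S 1
  | genAD x y : genA S x -> genA S y -> genA S (x + y)
  | genAZ (k : C) x : genA S x -> genA S (k *: x)
  | genAM x y : genA S x -> genA S y -> genA S (x * y).

Inductive genF (J : Type) (S : J -> F -> Prop) : F -> Prop :=
  | genF_base j x : S j x -> genF S x
  | genF0 : genF S 0
  | genFD x y : genF S x -> genF S y -> genF S (x + y)
  | genFZ (k : C) x : genF S x -> genF S (k *: x)
  | genFM x y : genF S x -> genF S y -> genF S (mulF x y).

Definition weakly_Bfree (phi : A -> C) (Phi : F -> C) (I J : Type)
    (Af : I -> A -> Prop) (Ff : J -> F -> Prop) : Prop :=
  (forall (n : nat) (idx : nat -> I) (c : nat -> A),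
      (0 < n)%N ->
      (forall l, (l.+1 < n)%N -> idx l <> idx l.+1) ->
      (forall l, (l < n)%N -> Af (idx l) (c l)) ->
      (forall l, (l < n)%N -> phi (c l) = 0) ->
      phi (\prod_(0 <= l < n) c l) = 0)
  /\
  (* Phi(c_0 g_1 c_1 ... g_n c_n) = phi(c_0 c_n) prod_{l=1}^{n-1} phi(c_l) Phi(g_1...g_n),
     for n = m+1 >= 1, c_l in A_0, g_l in F_0 *)
  (forall (m : nat) (g : nat -> F) (c : nat -> A),
      (forall l, (l <= m.+1)%N -> genA Af (c l)) ->
      (forall l, (1 <= l <= m.+1)%N -> genF Ff (g l)) ->
      Phi (lact (c 0%N) (tailword g c 1 m)) =
        phi (c 0%N * c m.+1) * (\prod_(1 <= l < m.+1) phi (c l)) * Phi (prodF g 1 m)).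

Definition FP (P : F) : F -> Prop := fun f => exists (k : C) (n : nat), f = k *: powF P n.

(* the family (F_i)_{i in I} extended by F_P at the extra index None *)
Definition extFam (I : Type) (Ff : I -> F -> Prop) (P : F) : option I -> F -> Prop :=
  fun j => match j with Some i => Ff i | None => FP P end.

End NCPS.

From HB Require Import structures.
From mathcomp Require Import all_boot all_order all_algebra.
From mathcomp Require Import complex Rstruct.
From mathcomp Require Import zify.
Set Implicit Arguments. Unset Strict Implicit. Unset Printing Implicit Defensive.
Import GRing.Theory.
Local Open Scope ring_scope.

(* Expand b_1 ... b_n = (a_1 + F_1) ... (a_n + F_n).  Every term other than
   F_1 ... F_n contains a maximal run a_j ... a_(k-1) of A-factors.  Writing P
   and the F_l as combinations of words c_0 g_1 c_1 ... g_m c_m, the product P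
   times such a term becomes a combination of words one of whose A-letters is
   c a_j ... a_(k-1) c', where c is the last A-letter of F_(j-1) (or 1) and c'
   the first A-letter of F_k (or 1).  After centering c and c', freeness of the
   A_i gives phi (c a_j ... a_(k-1) c') = 0, and weak B'-freeness factors Phi
   of each word through this value, so the term contributes nothing.  The
   expansion is carried out from left to right, the part already expanded
   being kept in the form u (c a_j ... a_(k-1)) with u a combination of words
   ending in an F-letter. *)

Inductive linspan (R : pzRingType) (V : lmodType R) (S : V -> Prop) : V -> Prop :=
  | linspan_gen x : S x -> linspan S x
  | linspan0 : linspan S 0
  | linspanD x y : linspan S x -> linspan S y -> linspan S (x + y)
  | linspanZ (a : R) x : linspan S x -> linspan S (a *: x).

Section LinearFor.
Variables (R : pzRingType) (V : lmodType R) (W : zmodType) (s : GRing.Scale.law R W).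

Lemma linear_for0 (f : V -> W) : linear_for s f -> f 0 = 0.
Proof. by move=> /GRing.zmod_morphism_linear fB; rewrite -(subrr (0 : V)) fB subrr. Qed.

Lemma linear_forD (f : V -> W) : linear_for s f -> {morph f : x y / x + y}.
Proof. by case/GRing.semilinear_linear. Qed.

Lemma linear_forZ (f : V -> W) : linear_for s f -> forall a x, f (a *: x) = s a (f x).
Proof. by case/GRing.semilinear_linear. Qed.

Lemma linear_for_comp (U : lmodType R) (f : V -> W) (g : U -> V) :
  linear_for s f -> linear g -> linear_for s (fun x => f (g x)).
Proof. by move=> fL gL a x y; rewrite gL fL. Qed.

Lemma linspan_linear0 (S : V -> Prop) (f : V -> W) :
  linear_for s f -> (forall x, S x -> f x = 0) -> forall x, linspan S x -> f x = 0.
Proof.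
move=> fL fS x; elim=> {x} [x /fS //| |x y _ fx _ fy|a x _ fx].
- exact: linear_for0.
- by rewrite linear_forD // fx fy addr0.
- by rewrite linear_forZ // fx -(linear_for0 fL) -linear_forZ // scaler0.
Qed.

Lemma linspan_linear_eq (S : V -> Prop) (f g : V -> W) :
  linear_for s f -> linear_for s g -> (forall x, S x -> f x = g x) ->
  forall x, linspan S x -> f x = g x.
Proof.
move=> fL gL fgS x; elim=> {x} [x /fgS //| |x y _ fgx _ fgy|a x _ fgx].
- by rewrite !linear_for0.
- by rewrite !linear_forD // fgx fgy.
- by rewrite !linear_forZ // fgx.
Qed.

End LinearFor.

Lemma linspan_linear_image (R : pzRingType) (V W : lmodType R)
    (S : V -> Prop) (T : W -> Prop) (f : V -> W) :
  linear f -> (forall x, S x -> linspan T (f x)) ->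
  forall x, linspan S x -> linspan T (f x).
Proof.
move=> fL fST x; elim=> {x} [x /fST //| |x y _ Tx _ Ty|a x _ Tx].
- by rewrite (linear_for0 fL); apply: linspan0.
- by rewrite (linear_forD fL); apply: linspanD.
- by rewrite (linear_forZ fL); apply: linspanZ.
Qed.

Lemma prod_nat_extendr (R : pzSemiRingType) (e : nat -> R) j k x : (j <= k)%N ->
  \prod_(j <= l < k) e l * x = \prod_(j <= l < k.+1) (if l == k then x else e l).
Proof.
move=> jk; rewrite big_nat_recr //= eqxx; congr (_ * _).
by apply: eq_big_nat => l /andP[_ lk]; rewrite ltn_eqF.
Qed.

Lemma prod_nat_extendl (R : pzSemiRingType) (e : nat -> R) j k x : (0 < j <= k)%N ->
  x * \prod_(j <= l < k) e l = \prod_(j.-1 <= l < k) (if l == j.-1 then x else e l).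
Proof.
case: j => // j /= jk; rewrite [RHS]big_ltn // eqxx; congr (_ * _).
by apply: eq_big_nat => l /andP[jl _]; rewrite gtn_eqF.
Qed.

Lemma map_nth_iota1 (T : Type) (x0 : T) (s : seq T) :
  [seq nth x0 s l.-1 | l <- iota 1 (size s)] = s.
Proof.
by rewrite (iotaDl 1 0) -map_comp (eq_map (g := nth x0 s)) // map_nth_iota0 ?take_size.
Qed.

Section Ncps.
Variables (A : algType C) (F : lmodType C) (phi : A -> C) (mulF : F -> F -> F)
  (lact : A -> F -> F) (ract : F -> A -> F) (Phi : F -> C).
Hypothesis Hn : ncpsB' mulF lact ract phi Phi.

Lemma mulF_linearl z : linear (mulF^~ z).
Proof. by move=> c x y; apply: (mulF_linl Hn). Qed.
Lemma mulF_linearr x : linear (mulF x).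
Proof. by move=> c y z; apply: (mulF_linr Hn). Qed.
Lemma ract_linearl c : linear (ract^~ c).
Proof. by move=> k x y; apply: (ract_linl Hn). Qed.
Lemma ract_linearr x : linear (ract x).
Proof. by move=> k c d; apply: (ract_linr Hn). Qed.
Lemma lact_linearl x : linear (lact^~ x).
Proof. by move=> k c d; apply: (lact_linl Hn). Qed.
Lemma Phi_scalar : scalar Phi.
Proof. exact: (ncps_Phi_lin Hn). Qed.
Lemma phiD : {morph phi : x y / x + y}.
Proof. exact: (linear_forD (ncps_phi_lin Hn)). Qed.
Lemma phiZ a x : phi (a *: x) = a * phi x.
Proof. exact: (linear_forZ (ncps_phi_lin Hn)). Qed.

Fixpoint word (s : seq (F * A)) (g : F) : F :=
  if s is y :: s' then mulF (ract y.1 y.2) (word s' g) else g.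
Fixpoint letters (s : seq (F * A)) (g : F) : F :=
  if s is y :: s' then mulF y.1 (letters s' g) else g.

Lemma ract_word s g c : ract (word s g) c = word s (ract g c).
Proof. by elim: s => //= y s IH; rewrite (ract_mulF Hn) IH. Qed.

Lemma mulF_word s g z : mulF (word s g) z = word s (mulF g z).
Proof. by elim: s => //= y s IH; rewrite -(mulF_assoc Hn) IH. Qed.

Lemma word_cat s t g : word (s ++ t) g = word s (word t g).
Proof. by elim: s => //= y s ->. Qed.

Lemma mulF_ract_word s g c t h :
  mulF (ract (word s g) c) (word t h) = word (s ++ (g, c) :: t) h.
Proof. by rewrite ract_word mulF_word word_cat. Qed.

Lemma mulF_ract_lact x c c' y : mulF (ract x c) (lact c' y) = mulF (ract x (c * c')) y.
Proof. by rewrite !(mid_mulF Hn) (lactM Hn). Qed.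

Lemma tailword_word (g : nat -> F) (c : nat -> A) k m :
  tailword mulF ract g c k m =
  ract (word [seq (g l, c l) | l <- iota k m] (g (k + m)%N)) (c (k + m)%N).
Proof.
elim: m k => [|m IH] k /=; first by rewrite addn0.
by rewrite IH (ract_mulF Hn) addSnnS.
Qed.

Lemma prodF_letters (g : nat -> F) (c : nat -> A) k m :
  prodF mulF g k m = letters [seq (g l, c l) | l <- iota k m] (g (k + m)%N).
Proof.
elim: m k => [|m IH] k /=; first by rewrite addn0.
by rewrite IH addSnnS.
Qed.

Definition actB (x : F) (b : A * F) : F := ract x b.1 + mulF x b.2.

Lemma actB_linear b : linear (actB^~ b).
Proof.
by move=> k x y; rewrite /actB (ract_linl Hn) (mulF_linl Hn) scalerDr addrACA.
Qed.

Lemma actB_mulB x b b' :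
  actB x (mulB mulF lact ract b b') = actB (actB x b) b'.
Proof.
rewrite /actB /mulB /= (ractM Hn) !(linear_forD (mulF_linearr x)).
rewrite (linear_forD (ract_linearl _)) (linear_forD (mulF_linearl _)).
rewrite (ract_mulF Hn) (mid_mulF Hn) (mulF_assoc Hn).
by rewrite -[RHS]addrA; congr (_ + _); rewrite addrCA addrA.
Qed.

Lemma actB_oneB x : actB x (oneB A F) = x.
Proof. by rewrite /actB /= (ract1 Hn) (linear_for0 (mulF_linearr x)) addr0. Qed.

Lemma actB0 x g : actB x (0, g) = mulF x g.
Proof. by rewrite /actB /= (linear_for0 (ract_linearr x)) add0r. Qed.

Lemma mulB0 g b : mulB mulF lact ract (0, g) b = (0, actB g b).
Proof. by rewrite /mulB /= mul0r (linear_for0 (lact_linearl _)) add0r. Qed.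

Section WeakFreeness.
Variables (I J : Type) (Af : I -> A -> Prop) (Fg : J -> F -> Prop).
Hypothesis Hw : weakly_Bfree mulF lact ract phi Phi Af Fg.
Local Notation gA := (genA Af).
Local Notation gF := (genF mulF Fg).

Definition admissible (s : seq (F * A)) := forall y, y \in s -> gF y.1 /\ gA y.2.

Lemma admissible_cat s t g c :
  admissible s -> admissible t -> gF g -> gA c -> admissible (s ++ (g, c) :: t).
Proof.
move=> sA tA gFg gAc y; rewrite mem_cat inE => /orP[/sA //|/orP[/eqP -> //|/tA //]].
Qed.

Lemma Phi_word s g c : admissible s -> gF g -> gA c ->
  Phi (ract (word s g) c) = phi c * \prod_(y <- s) phi y.2 * Phi (letters s g).
Proof.
move=> sA gFg gAc; pose y l := nth (g, c) s l.-1.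
pose cs l := if l is 0 then 1 else (y l).2.
have yA l : gF (y l).1 /\ gA (y l).2.
  by rewrite /y; case: (ltnP l.-1 (size s)) => [/(mem_nth (g, c))/sA|/(nth_default _) ->].
have s_def : [seq ((y l).1, cs l) | l <- iota 1 (size s)] = s.
  rewrite -[RHS](map_nth_iota1 (g, c)); apply/eq_in_map => -[|l]; rewrite mem_iota //= => _.
  by rewrite /y /= -surjective_pairing.
have y_last : y (size s).+1 = (g, c) by rewrite /y nth_default.
have := (proj2 Hw) (size s) (fun l => (y l).1) cs.
rewrite (lact1 Hn) tailword_word (prodF_letters _ cs) add1n s_def /= y_last /= mul1r => -> //.
- congr (_ * _ * _).
  by rewrite -[in RHS]s_def big_map /index_iota subSS subn0.
- by case=> [|l] _; [apply: genA1 | apply: (yA _).2].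
- by move=> l _; apply: (yA _).1.
Qed.

Definition is_word (x : F) := exists s g, [/\ admissible s, gF g & x = word s g].
Definition is_bracketed (S T : A -> Prop) (x : F) :=
  exists c s g d, [/\ S c, T d, admissible s, gF g & x = lact c (ract (word s g) d)].

Lemma Phi_words_centered u q :
  linspan is_word u -> gA q -> phi q = 0 -> Phi (ract u q) = 0.
Proof.
move=> uW gAq q0; apply: (linspan_linear0 (linear_for_comp Phi_scalar (ract_linearl q))) uW.
by move=> _ [s [g [sA gFg ->]]]; rewrite Phi_word // q0 !mul0r.
Qed.

Lemma Phi_words_bracketed S T u v q :
  linspan is_word u -> linspan (is_bracketed S T) v -> gA q ->
  (forall c, S c -> gA c /\ phi (q * c) = 0) -> (forall d, T d -> gA d) ->
  Phi (mulF (ract u q) v) = 0.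
Proof.
move=> uW vB gAq Sq TA.
have PhiL v' :=
  linear_for_comp Phi_scalar (linear_for_comp (mulF_linearl v') (ract_linearl q)).
apply: (linspan_linear0 (PhiL v)) uW => _ [s [g [sA gFg ->]]].
apply: (linspan_linear0 (linear_for_comp Phi_scalar (mulF_linearr _))) vB.
move=> _ [c [t [h [d [Sc /TA gAd tA gFh ->]]]]].
have [gAc qc0] := Sq c Sc.
rewrite mulF_ract_lact -(ract_mulF Hn) mulF_ract_word Phi_word //; last first.
  by apply: admissible_cat => //; apply: genAM.
by rewrite big_cat big_cons /= qc0 !(mul0r, mulr0).
Qed.

Lemma linspan_word_mul u c s g :
  linspan is_word u -> gA c -> admissible s -> gF g ->
  linspan is_word (mulF (ract u c) (word s g)).
Proof.
move=> uW gAc sA gFg.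
apply: (linspan_linear_image (linear_for_comp (mulF_linearl _) (ract_linearl c))) uW.
move=> _ [t [h [tA gFh ->]]]; rewrite mulF_ract_word.
by apply: linspan_gen; exists (t ++ (h, c) :: s), g; split => //; apply: admissible_cat.
Qed.

Lemma linspan_bracketed_mul S T S' T' v w :
  (forall d, T d -> gA d) -> (forall c, S' c -> gA c) ->
  linspan (is_bracketed S T) v -> linspan (is_bracketed S' T') w ->
  linspan (is_bracketed S T') (mulF v w).
Proof.
move=> TA S'A vB wB.
apply: (linspan_linear_image (mulF_linearl w)) vB => _ [c [s [g [d [Sc Td sA gFg ->]]]]].
apply: (linspan_linear_image (mulF_linearr _)) wB => _ [c' [t [h [d' [S'c' T'd' tA gFh ->]]]]].
rewrite -(lact_mulF Hn) mulF_ract_lact -(ract_mulF Hn) mulF_ract_word.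
apply: linspan_gen; exists c, (s ++ (g, d * c') :: t), h, d'; split => //.
by apply: admissible_cat => //; apply: genAM; [apply: TA | apply: S'A].
Qed.

Lemma AFspan_bracketed (SA T : A -> Prop) (SF : F -> Prop) x :
  (forall c, SA c -> gA c) -> (forall c, SA c -> T c) -> (forall g, SF g -> gF g) ->
  AFspan mulF lact ract SA SF x -> linspan (is_bracketed SA T) x.
Proof.
move=> SAA SAT SFF; elim=> {x} [m g c cA gF'| |x y _ xB _ yB|k x _ xB]; last 3 first.
- exact: linspan0.
- exact: linspanD.
- exact: linspanZ.
apply: linspan_gen; exists (c 0%N), [seq (g l, c l) | l <- iota 1 m], (g m.+1), (c m.+1).
rewrite tailword_word add1n; split => //; [exact: cA | exact/SAT/cA | | apply/SFF/gF'; lia].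
move=> y /mapP[l]; rewrite mem_iota => /andP[l1 lm] -> /=.
by split; [apply/SFF/gF' | apply/SAA/cA]; lia.
Qed.

Section CenteredRuns.
Hypothesis Asub : forall i, subalgA (Af i).

Definition center (x : A) : A := x - phi x *: 1.

Lemma centerE x : x = phi x *: 1 + center x.
Proof. by rewrite /center addrC subrK. Qed.

Lemma center_centered i x : Af i x -> Af i (center x) /\ phi (center x) = 0.
Proof.
move=> Aix; have [A1 AD AZ _] := Asub i; rewrite /center addrC -scaleNr.
by split; [apply: AD => //; apply: AZ | rewrite phiD phiZ (ncps_phi1 Hn) mulr1 addNr].
Qed.

Variables (n : nat) (idx : nat -> I).
Hypothesis idx_alt : forall l, (l.+1 < n)%N -> idx l <> idx l.+1.

Definition centered_on (j k : nat) (e : nat -> A) :=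
  forall l, (j <= l < k)%N -> Af (idx l) (e l) /\ phi (e l) = 0.
Definition left_end (j : nat) (c : A) := c = 1 \/ (0 < j)%N /\ Af (idx j.-1) c.
Definition right_end (k : nat) (c : A) := c = 1 \/ (k < n)%N /\ Af (idx k) c.

Lemma phi_prod_centered j k e :
  (j < k <= n)%N -> centered_on j k e -> phi (\prod_(j <= l < k) e l) = 0.
Proof.
move=> /andP[jk kn] eC; rewrite -{1}[j]add0n big_addn.
apply: (proj1 Hw) (fun l => idx (l + j)) (fun l => e (l + j)) _ _ _ _ => [|l lt|l lt|l lt].
- lia.
- by rewrite addSn; apply: idx_alt; lia.
- by apply: (eC _ _).1; lia.
- by apply: (eC _ _).2; lia.
Qed.

Lemma phi_prod_centered_mulr j k e c :
  (j < k <= n)%N -> centered_on j k e -> right_end k c ->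
  phi (\prod_(j <= l < k) e l * c) = 0.
Proof.
move=> jkn eC [->|[kn Ac]]; first by rewrite mulr1 phi_prod_centered.
have [Ac' c'0] := center_centered Ac.
rewrite [c]centerE mulrDr -scalerAr mulr1 phiD phiZ.
rewrite phi_prod_centered // mulr0 add0r prod_nat_extendr; last lia.
apply: phi_prod_centered => [|l]; first lia.
by case: eqP => [-> _|lk' lk]; [split | apply: eC; lia].
Qed.

Lemma phi_prod_centered_ends j k e c c' :
  (j < k <= n)%N -> centered_on j k e -> left_end j c -> right_end k c' ->
  phi (c * \prod_(j <= l < k) e l * c') = 0.
Proof.
move=> jkn eC [->|[j0 Ac]] c'R; first by rewrite mul1r phi_prod_centered_mulr.
have [Ac' c0] := center_centered Ac.
rewrite [c]centerE 2!mulrDl -!scalerAl mul1r phiD phiZ.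
rewrite phi_prod_centered_mulr // mulr0 add0r prod_nat_extendl; last lia.
apply: phi_prod_centered_mulr => // [|l]; first lia.
by case: eqP => [-> _|lj lk]; [split | apply: eC; lia].
Qed.

Section Suffixes.
Variables (a : nat -> A) (f : nat -> F) (Ff : I -> F -> Prop) (P : F).
Hypothesis a_centered : centered_on 0 n a.
Hypothesis f_span :
  forall k, (k < n)%N -> AFspan mulF lact ract (Af (idx k)) (Ff (idx k)) (f k).
Hypothesis Ff_gen : forall i g, Ff i g -> gF g.
Hypothesis P_gen : gF P.

Definition suffix_prod (b : nat -> A * F) (k : nat) :=
  prodB mulF lact ract [seq b j | j <- iota k (n - k)].

Lemma suffix_prod_cons b k : (k < n)%N ->
  suffix_prod b k = mulB mulF lact ract (b k) (suffix_prod b k.+1).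
Proof. by move=> kn; rewrite /suffix_prod (_ : n - k = (n - k.+1).+1)%N //; lia. Qed.

Lemma suffix_prod_n b : suffix_prod b n = oneB A F.
Proof. by rewrite /suffix_prod subnn. Qed.

Local Notation tail := (suffix_prod (fun j => (a j, f j))).
Local Notation tailF := (suffix_prod (fun j => (0, f j))).

Lemma f_bracketed k T : (k < n)%N -> (forall c, Af (idx k) c -> T c) ->
  linspan (is_bracketed (Af (idx k)) T) (f k).
Proof.
move=> kn AT; apply: AFspan_bracketed (f_span kn) => // [c|].
  exact: genA_base.
exact: Ff_gen.
Qed.

Lemma tailF_bracketed k : (k < n)%N ->
  exists2 v, tailF k = (0, v) & linspan (is_bracketed (Af (idx k)) gA) v.
Proof.
move Em : (n - k)%N => m; elim: m k Em => [|m IH] k Em kn; first lia.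
rewrite suffix_prod_cons // mulB0.
have [kn'|nk] := ltnP k.+1 n.
- have [v -> vB] := IH k.+1 ltac:(lia) kn'; rewrite actB0.
  exists (mulF (f k) v) => //.
  by apply: linspan_bracketed_mul (f_bracketed kn (fun _ => id)) vB => ?; exact: genA_base.
- rewrite (_ : k.+1 = n) ?suffix_prod_n ?actB_oneB; last lia.
  by exists (f k) => //; apply: f_bracketed kn _ => ?; exact: genA_base.
Qed.

Lemma a_centered_on j k : (k <= n)%N -> centered_on j k a.
Proof. by move=> kn l /andP[_ lk]; apply: a_centered; lia. Qed.

Lemma run_gen j k c : (k <= n)%N -> left_end j c -> gA (c * \prod_(j <= l < k) a l).
Proof.
move=> kn cL; apply: genAM.
  by case: cL => [->|[_ Ac]]; [apply: genA1 | apply: genA_base Ac].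
rewrite big_nat; apply: (big_ind gA); [exact: genA1 | exact: genAM |].
by move=> l /(a_centered_on kn)[Al _]; apply: genA_base Al.
Qed.

Lemma Phi_run_tailF_eq0 k j c u :
  (j < k <= n)%N -> left_end j c -> linspan is_word u ->
  Phi (actB (ract u (c * \prod_(j <= l < k) a l)) (tailF k)) = 0.
Proof.
move=> /andP[jk kn] cL uW; have q_gen := run_gen kn cL.
have [kn'|nk] := ltnP k n.
- have [v -> vB] := tailF_bracketed kn'; rewrite actB0.
  apply: Phi_words_bracketed uW vB q_gen _ _ => // c' Ac'.
  split; first exact: genA_base Ac'.
  by apply: phi_prod_centered_ends (a_centered_on kn) cL _; [lia | right].
- have kE : k = n by lia.
  subst k; rewrite suffix_prod_n actB_oneB.
  apply: Phi_words_centered uW q_gen _; rewrite -[_ * _]mulr1.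
  by apply: phi_prod_centered_ends (a_centered_on kn) cL _; [lia | left].
Qed.

Lemma Phi_tail_eq_tailF k j c u :
  (j <= k <= n)%N -> left_end j c -> linspan is_word u ->
  Phi (actB (ract u (c * \prod_(j <= l < k) a l)) (tail k)) =
  Phi (actB (ract u (c * \prod_(j <= l < k) a l)) (tailF k)).
Proof.
move Em : (n - k)%N => m; elim: m k Em j c u => [|m IH] k Em j c u jkn cL uW.
  by rewrite (_ : k = n) ?suffix_prod_n //; lia.
have kn : (k < n)%N by lia.
rewrite !(suffix_prod_cons _ kn) !actB_mulB actB0 [actB _ (a k, f k)]/actB.
rewrite (linear_forD (actB_linear _)) (linear_forD Phi_scalar).
have -> : Phi (actB (ract (ract u (c * \prod_(j <= l < k) a l)) (a k)) (tail k.+1)) = 0.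
  rewrite -(ractM Hn) -mulrA -big_nat_recr /=; last lia.
  rewrite IH //; try lia.
  by apply: Phi_run_tailF_eq0 => //; lia.
rewrite add0r /=.
set q := c * \prod_(j <= l < k) a l.
have PhiL t :=
  linear_for_comp Phi_scalar (linear_for_comp (actB_linear t) (mulF_linearr (ract u q))).
apply: (linspan_linear_eq (PhiL _) (PhiL _)) (f_bracketed kn (fun _ => id)).
move=> _ [c0 [s [g [d [Ac0 Ad sA gFg ->]]]]].
rewrite mulF_ract_lact -(ract_mulF Hn).
have := IH k.+1 ltac:(lia) k.+1 d (mulF (ract u (q * c0)) (word s g)).
rewrite big_geq // mulr1; apply; [lia | by right; split |].
apply: linspan_word_mul => //; apply: genAM; first exact: run_gen (ltnW kn) cL.
exact: genA_base Ac0.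
Qed.

Lemma Phi_P_tail_eq_tailF : Phi (actB P (tail 0)) = Phi (actB P (tailF 0)).
Proof.
have PW : linspan is_word P by apply: linspan_gen; exists [::], P.
have := @Phi_tail_eq_tailF 0 0 1 P _ (or_introl erefl) PW.
by rewrite big_geq // mulr1 (ract1 Hn); apply.
Qed.

End Suffixes.

End CenteredRuns.

End WeakFreeness.

End Ncps.

Theorem lemma4p7 (A : algType C) (F : lmodType C)
    (phi : A -> C) (mulF : F -> F -> F) (lact : A -> F -> F) (ract : F -> A -> F)
    (Phi : F -> C) (I : Type) (Af : I -> A -> Prop) (Ff : I -> F -> Prop) (P : F) :
  ncpsB' mulF lact ract phi Phi ->
  (forall i, subalgA (Af i)) ->
  (forall i, subalgF mulF (Ff i)) ->
  Phi P != 0 ->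
  weakly_Bfree mulF lact ract phi Phi Af (extFam mulF Ff P) ->
  forall (n : nat) (idx : nat -> I) (a : nat -> A) (f : nat -> F),
    (forall l, (l.+1 < n)%N -> idx l <> idx l.+1) ->
    (forall j, (j < n)%N -> Af (idx j) (a j)) ->
    (forall j, (j < n)%N -> AFspan mulF lact ract (Af (idx j)) (Ff (idx j)) (f j)) ->
    (forall j, (j < n)%N -> phiB phi (a j, f j) = 0) ->
    phiP mulF ract Phi P (prodB mulF lact ract [seq (a j, f j) | j <- iota 0 n]) =
    phiP mulF ract Phi P (prodB mulF lact ract [seq (0, f j) | j <- iota 0 n]).
Proof.
move=> Hn Asub _ _ Hw n idx a f idx_alt Aa f_span a0.
pose Fg := extFam mulF Ff P.
have Ff_gen i g : Ff i g -> genF mulF Fg g := @genF_base _ mulF _ Fg (Some i) g.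
have P_gen : genF mulF Fg P.
  by apply: (@genF_base _ mulF _ Fg None); exists 1, 0%N; rewrite scale1r.
have a_centered : centered_on phi Af idx 0 n a.
  by move=> j /andP[_ jn]; split; [apply: Aa | apply: a0].
have := Phi_P_tail_eq_tailF Hn Hw Asub idx_alt a_centered f_span Ff_gen P_gen.
by rewrite /suffix_prod subn0 /phiP => ->.
Qed.
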